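(* Let $n\ge 2$, let $d:L_n\to L_n$ be any map, and put $v=\frac{n-2}{n-1}$. Suppose $d(v)\le v$. Then $d$ is a $(\odot,\vee)$-derivation on $L_n$ if and only if both of the following hold: (1) $d(v^m)=v^{m-1}\odot d(v)$ for each $m\in\{1,2,\dots,n-1\}$ (where $v^0=1$ and $v^m=v\odot\cdots\odot v$ with $m$ factors); (2) $v\odot d(1)\le d(v)$.
   Context: An MV-algebra is an algebra $(A,\oplus,{}^*,0)$ of type $(2,1,0)$ satisfying: $x\oplus(y\oplus z)=(x\oplus y)\oplus z$, $x\oplus y=y\oplus x$, $x\oplus 0=x$, $x^{**}=x$, $x\oplus 0^*=0^*$, $(x^*\oplus y)^*\oplus y=(y^*\oplus x)^*\oplus x$. Put $1=0^*$ and $x\odot y=(x^*\oplus y^* )^*$. The natural order is $x\le y$ iff $x^*\oplus y=1$, with lattice operations $x\vee y=(x\odot y^* )\oplus y$, $x\wedge y=x\odot(x^*\oplus y)$. A $(\odot,\vee)$-derivation on $A$ is a map $d:A\to A$ with $d(x\odot y)=(d(x)\odot y)\vee(x\odot d(y))$ for all $x,y\in A$. $L_n=\{0,\frac1{n-1},\dots,\frac{n-2}{n-1},1\}$ with $x\oplus y=\min\{1,x+y\}$, $x^*=1-x$. *)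

From mathcomp Require Import all_boot.
Set Implicit Arguments. Unset Strict Implicit. Unset Printing Implicit Defensive.

(* The MV-chain L_n = {0, 1/(n-1), ..., (n-2)/(n-1), 1}.
   Encoding: the element i/(n-1) is represented by i : 'I_(n.-1).+1,
   i.e. by its numerator.  For n >= 2 this is a bijection. *)
Definition Ln (n : nat) := 'I_(n.-1).+1.

Definition Ln0 {n} : Ln n := ord0.
Definition Ln1 {n} : Ln n := ord_max.

Definition Loplus {n} (x y : Ln n) : Ln n := inord (minn (x + y) n.-1).
Definition Lstar {n} (x : Ln n) : Ln n := inord (n.-1 - x).

Definition Lodot {n} (x y : Ln n) : Ln n := Lstar (Loplus (Lstar x) (Lstar y)).
Definition Lle {n} (x y : Ln n) : Prop := Loplus (Lstar x) y = Ln1.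
Definition Ljoin {n} (x y : Ln n) : Ln n := Loplus (Lodot x (Lstar y)) y.

Definition Lv {n} : Ln n := inord n.-2.

Fixpoint Lpow {n} (x : Ln n) (m : nat) : Ln n :=
  match m with
  | 0 => Ln1
  | m'.+1 => Lodot x (Lpow x m')
  end.

Definition is_odot_join_derivation {n} (d : Ln n -> Ln n) : Prop :=
  forall x y : Ln n, d (Lodot x y) = Ljoin (Lodot (d x) y) (Lodot x (d y)).

From mathcomp Require Import all_boot.
From mathcomp Require Import zify.
Set Implicit Arguments. Unset Strict Implicit. Unset Printing Implicit Defensive.

(* Writing N = n - 1 and identifying k/N with its numerator k, the MV-chain
   L_n becomes {0, ..., N} with  x (.) y = x + y - N  (truncated),
   x \/ y = max x y,  x <= y the order of nat,  v = N - 1  and  v^m = N - m.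

   Forward direction: for ANY derivation d, expanding d(v (.) v^m) gives
   d(v^(m+1)) = v^m (.) d(v) by induction, and expanding d(v (.) 1) gives
   v (.) d(1) <= d(v).
   Converse: every z < N is a power of v (z = v^(N-z)), so condition (1)
   pins down d(z) = z + d(v) + 1 - N below the top, while (2) bounds d(1).
   The derivation identity is symmetric in x, y; for x, y < N it is an
   arithmetic identity (using d(v) <= v), and for x = 1 it reduces to
   d(1) (.) y <= d(y), which is where (2) is needed. *)

Section LukasiewiczChain.
Variable n : nat.
Local Notation N := n.-1.
Local Notation L := (Ln n).

Lemma LstarE (x : L) : nat_of_ord (Lstar x) = N - x.
Proof. by rewrite /Lstar inordK // ltnS leq_subr. Qed.

Lemma LoplusE (x y : L) : nat_of_ord (Loplus x y) = minn (x + y) N.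
Proof. by rewrite /Loplus inordK // ltnS geq_minr. Qed.

Lemma LodotE (x y : L) : nat_of_ord (Lodot x y) = x + y - N.
Proof.
rewrite /Lodot LstarE LoplusE !LstarE.
have := ltn_ord x; have := ltn_ord y; lia.
Qed.

Lemma LjoinE (x y : L) : nat_of_ord (Ljoin x y) = maxn x y.
Proof.
rewrite /Ljoin LoplusE LodotE LstarE.
have := ltn_ord x; have := ltn_ord y; lia.
Qed.

Lemma Ln1E : nat_of_ord (@Ln1 n) = N.
Proof. by []. Qed.

Lemma LleE (x y : L) : Lle x y <-> x <= y.
Proof.
rewrite /Lle; have := ltn_ord x; have := ltn_ord y => hy hx; split.
  by move/(congr1 val) => /=; rewrite LoplusE LstarE ?Ln1E; lia.
by move=> hxy; apply: val_inj => /=; rewrite LoplusE LstarE ?Ln1E; lia.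
Qed.

Lemma LodotC (x y : L) : Lodot x y = Lodot y x.
Proof. by apply: val_inj => /=; rewrite !LodotE addnC. Qed.

Lemma LjoinC (x y : L) : Ljoin x y = Ljoin y x.
Proof. by apply: val_inj => /=; rewrite !LjoinE maxnC. Qed.

Lemma Lodotx1 (x : L) : Lodot x Ln1 = x.
Proof. by apply: val_inj => /=; rewrite LodotE Ln1E addnK. Qed.

Lemma Lodot1x (x : L) : Lodot Ln1 x = x.
Proof. by rewrite LodotC Lodotx1. Qed.

Lemma Ljoin_idPr (x y : L) : x <= y -> Ljoin x y = y.
Proof. by move=> hxy; apply: val_inj => /=; rewrite LjoinE; lia. Qed.

Lemma Ln_top_or_below (x : L) : nat_of_ord x < N \/ x = Ln1.
Proof.
have := ltn_ord x; case: (ltnP x N) => [hx _|hx hxN]; first by left.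
by right; apply: val_inj => /=; rewrite ?Ln1E; lia.
Qed.

Section Converse.
(* The data determined by conditions (1) and (2): below the top, d adds
   a + 1 - N, where a = d(v) <= v; and d(1) exceeds a by at most one. *)
Variables (d : L -> L) (a : nat).
Hypothesis a_le_v : a <= N.-1.
Hypothesis d_below_top :
  forall z : L, nat_of_ord z < N -> nat_of_ord (d z) = z + a.+1 - N.
Hypothesis d_top : nat_of_ord (d Ln1) <= a.+1.

Lemma derivation_identity_below x y : nat_of_ord x < N ->
  d (Lodot x y) = Ljoin (Lodot (d x) y) (Lodot x (d y)).
Proof.
move=> hx; have hd1 := ltn_ord (d Ln1).
case: (Ln_top_or_below y) => [hy|->].
  have hxy : nat_of_ord (Lodot x y) < N by rewrite LodotE; lia.
  by apply: val_inj => /=; rewrite LjoinE !LodotE !d_below_top // LodotE; lia.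
rewrite !Lodotx1; apply: val_inj => /=.
by rewrite LjoinE LodotE d_below_top //; lia.
Qed.

(* Such a map is a derivation: by symmetry of the identity in x and y, only
   the case x = y = 1 is left, and it is trivial. *)
Lemma derivation_of_shape : is_odot_join_derivation d.
Proof.
have sym x y : d (Lodot x y) = Ljoin (Lodot (d x) y) (Lodot x (d y)) ->
  d (Lodot y x) = Ljoin (Lodot (d y) x) (Lodot y (d x)).
  by rewrite LodotC LjoinC [Lodot (d x) _]LodotC [Lodot x _]LodotC.
move=> x y; case: (Ln_top_or_below x) => [hx|->].
  exact: derivation_identity_below.
case: (Ln_top_or_below y) => [hy|->]; last first.
  by rewrite !Lodotx1 Lodot1x Ljoin_idPr.
by apply: sym; rewrite derivation_identity_below.
Qed.

End Converse.

Hypothesis hn : 2 <= n.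

Lemma LvE : nat_of_ord (@Lv n) = N.-1.
Proof. by rewrite /Lv inordK //; lia. Qed.

Lemma LpowE m : nat_of_ord (Lpow (@Lv n) m) = N - m.
Proof.
elim: m => [|m IH] /=; first by rewrite subn0.
by rewrite LodotE IH LvE; lia.
Qed.

Lemma Lpow_below_top (z : L) : nat_of_ord z < N -> Lpow Lv (N - z) = z.
Proof. by move=> hz; apply: val_inj => /=; rewrite LpowE; lia. Qed.

Section Derivation.
Variable d : L -> L.
Hypothesis der : is_odot_join_derivation d.

Lemma derivation_pow m : d (Lpow Lv m.+1) = Lodot (Lpow Lv m) (d Lv).
Proof.
elim: m => [|m IH]; first by rewrite /= Lodotx1 Lodot1x.
rewrite [Lpow Lv m.+2]/= der IH; apply: val_inj => /=.
rewrite LjoinE !LodotE !LpowE LvE /=.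
have := ltn_ord (d Lv); lia.
Qed.

(* Condition (2) holds for every derivation: d(v) = d(v) \/ (v (.) d(1)). *)
Lemma derivation_top : Lle (Lodot Lv (d Ln1)) (d Lv).
Proof.
apply/LleE; have := congr1 val (der Lv Ln1).
by rewrite /= Lodotx1 LjoinE Lodotx1; lia.
Qed.

End Derivation.

End LukasiewiczChain.

Theorem theorem3p10 (n : nat) (hn : 2 <= n) (d : Ln n -> Ln n) :
  Lle (d Lv) Lv ->
  (is_odot_join_derivation d <->
   ((forall m : nat, 1 <= m <= n - 1 ->
       d (Lpow Lv m) = Lodot (Lpow Lv m.-1) (d Lv))
    /\ Lle (Lodot Lv (d Ln1)) (d Lv))).
Proof.
move=> /LleE; rewrite LvE // => dv_le_v; split.
  move=> der; split; last exact: derivation_top.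
  by case=> [//|m] _; exact: derivation_pow.
move=> [d_pow /LleE d_top]; apply: (@derivation_of_shape _ d (d Lv)) => //.
- move=> z hz; rewrite -{1}(Lpow_below_top hn hz) d_pow; last by lia.
  by rewrite LodotE LpowE //; lia.
- by move: d_top; rewrite LodotE LvE //; lia.
Qed.
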